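(* Let $\kappa=\mathrm{non}(\mathsf{SMZ})$ be the minimal cardinality of a set of reals that is not strongly null. Assume that there exists a strongly unbounded set $A\subseteq\mathbb{N}^{\mathbb{N}}$ with $|A|=\kappa$. Then there exist a strongly null set of reals $X\subseteq\mathbb{R}$ and a continuous function $f$ defined on $X$ whose image $Y=f[X]$ is a set of reals that is not strongly null.
   Context: A set of reals $X\subseteq\mathbb{R}$ is strongly null (has strong measure zero) if for each sequence $(\epsilon_n)_{n\in\mathbb{N}}$ of positive reals there exists a sequence of intervals $(I_n)_{n\in\mathbb{N}}$ covering $X$ with $\mathrm{diam}(I_n)<\epsilon_n$ for all $n$. $\mathsf{SMZ}$ denotes the collection of strongly null sets of reals, and $\mathrm{non}(\mathsf{SMZ})=\min\{|X| : X\subseteq\mathbb{R},\ X\notin\mathsf{SMZ}\}$. For $f,g\in\mathbb{N}^{\mathbb{N}}$, $f\le^* g$ means $f(n)\le g(n)$ for all but finitely many $n$. A set $A\subseteq\mathbb{N}^{\mathbb{N}}$ is strongly unbounded if for each $f\in\mathbb{N}^{\mathbb{N}}$, $|\{g\in A : g\le^* f\}|<|A|$. *)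

From HB Require Import structures.
From mathcomp Require Import all_boot all_order all_algebra.
From mathcomp Require Import all_classical all_reals all_analysis.
Set Implicit Arguments. Unset Strict Implicit. Unset Printing Implicit Defensive.
Import Order.TTheory GRing.Theory Num.Theory.
Local Open Scope classical_set_scope.
Local Open Scope ring_scope.

Definition card_lt T U (A : set T) (B : set U) : Prop :=
  card_le A B /\ ~ card_le B A.

(* X is strongly null: for every sequence of positive reals eps, X is covered by
   intervals I_n with diam(I_n) < eps n (intervals taken closed; any interval of
   diameter < eps n lies in a closed interval of length < eps n). *)
Definition strongly_null (R : realType) (X : set R) : Prop :=
  forall eps : nat -> R, (forall n, 0 < eps n) ->
    exists a b : nat -> R, (forall n, b n - a n < eps n) /\
      X `<=` \bigcup_n `[a n, b n]%classic.

Definition leq_star (f g : nat -> nat) : Prop :=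
  exists N, forall n, (N <= n)%N -> (f n <= g n)%N.

(* |A| = non(SMZ): A is equinumerous with some non-strongly-null set of reals X0
   such that every set of reals of cardinality < |X0| is strongly null. *)
Definition card_is_nonSMZ (R : realType) T (A : set T) : Prop :=
  exists X0 : set R, ~ strongly_null X0 /\ card_eq A X0 /\
    forall Z : set R, card_lt Z X0 -> strongly_null Z.

Definition strongly_unbounded (A : set (nat -> nat)) : Prop :=
  forall f : nat -> nat, card_lt [set g | A g /\ leq_star g f] A.

From HB Require Import structures.
From mathcomp Require Import all_boot all_order all_algebra.
From mathcomp Require Import all_classical all_reals all_analysis.
From mathcomp Require Import lra zify.
Import Order.TTheory GRing.Theory Num.Theory.
Import numFieldNormedType.Exports.
Local Open Scope classical_set_scope.
Local Open Scope ring_scope.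

(* Fix a set X0 of reals of size non(SMZ) that is not strongly null, and a
   bijection k : X0 -> A.  Code y in X0 by the sequence w_y interleaving k(y)
   with the dyadic digits floor(2^n y), and map w_y into the reals by the
   Cantor-set embedding of Baire space.  Let X be the image of X0 and f the
   decoding map, so that f[X] = X0.  Nearby codes share long prefixes, hence
   long dyadic expansions, so f is continuous.  X is strongly null: for a fast
   growing G, the codes of sequences escaping G are covered by the odd-indexed
   intervals (a prefix followed by a large entry pins the code down to a tiny
   interval); the w_y bounded by G have k(y) <=* G(2 _), so there are fewer
   than non(SMZ) of them and they are covered by the even-indexed intervals. *)

Section NatCodes.
Local Open Scope nat_scope.

Lemma code_lt_exp (s : seq nat) (B : nat) :
  all (leq^~ B) s -> CodeSeq.code s < 2 ^ (size s * B.+1).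
Proof.
elim: s => [|x s IH] //= /andP[xB /IH] code_lt.
rewrite mulSn expnD; apply: (@leq_trans (2 ^ x.+1 * 2 ^ (size s * B.+1))).
  by rewrite expnS -mulnA mulnCA ltn_pmul2l ?expn_gt0 //; lia.
by rewrite leq_pmul2r ?expn_gt0 // leq_exp2l.
Qed.

Definition prefix_max (L : nat -> nat) (K : nat) : nat := \max_(j < K.+1) L j.

Lemma leq_prefix_max L j K : j <= K -> L j <= prefix_max L K.
Proof. by move=> jK; rewrite /prefix_max (bigD1 (Ordinal (jK : j < K.+1))) // leq_maxl. Qed.

(* The codes of the sequences of length n bounded by cover_growth L n' are
   below 2 ^ (n * (cover_growth L n').+1) (code_lt_exp). *)
Fixpoint cover_growth (L : nat -> nat) (n : nat) : nat :=
  if n is n'.+1 then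
    maxn (cover_growth L n') (prefix_max L (2 ^ (n * (cover_growth L n').+1)))
  else prefix_max L 1.

Lemma cover_growth_mono L : {homo cover_growth L : m n / m <= n}.
Proof. by apply: homo_leq => [//|y x z|n]; [exact: leq_trans | exact: leq_maxl]. Qed.

Lemma leq_cover_growth_code L s :
  (forall i, i < size s -> nth 0 s i <= cover_growth L i) ->
  L (CodeSeq.code s) <= cover_growth L (size s).
Proof.
case: (lastP s) => [_|t x]; first exact: leq_prefix_max.
rewrite size_rcons => bounded /=; apply: leq_trans (leq_maxr _ _).
apply/leq_prefix_max/ltnW; rewrite -(size_rcons t x); apply: code_lt_exp.
apply/(all_nthP 0) => i; rewrite size_rcons => ilt.
by apply: leq_trans (bounded i ilt) (cover_growth_mono L _ _ _).
Qed.

Definition interleave {T} (u v : nat -> T) (n : nat) : T :=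
  if odd n then v n./2 else u n./2.

Lemma interleave_double {T} (u v : nat -> T) n : interleave u v n.*2 = u n.
Proof. by rewrite /interleave odd_double doubleK. Qed.

Lemma interleave_doubleS {T} (u v : nat -> T) n : interleave u v n.*2.+1 = v n.
Proof. by rewrite /interleave /= odd_double uphalf_double. Qed.

Definition code_pos (w : nat -> nat) (n : nat) : nat := n + \sum_(i < n.+1) w i.

Lemma code_posS w n : code_pos w n.+1 = (code_pos w n + w n.+1).+1.
Proof. by rewrite /code_pos big_ord_recr /=; lia. Qed.

Lemma leq_code_pos w n : w n <= code_pos w n.
Proof. by rewrite /code_pos big_ord_recr /= addnA leq_addl. Qed.

Lemma code_pos_mono w : {homo code_pos w : m n / m <= n}.
Proof.
apply: homo_leq => [//|y x z|n]; first exact: leq_trans.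
by rewrite code_posS; lia.
Qed.

Lemma eq_code_pos {w w' n} :
  (forall i, i <= n -> w i = w' i) -> code_pos w n = code_pos w' n.
Proof. by move=> ww'; congr (_ + _); apply: eq_bigr => i _; apply: ww'; rewrite -ltnS. Qed.

Lemma code_pos_lt {w w' n} :
  (forall i, i < n -> w i = w' i) -> w n < w' n -> code_pos w n < code_pos w' n.
Proof.
move=> ww' lt_n; rewrite /code_pos !big_ord_recr /=.
by rewrite (eq_bigr (fun i : 'I_n => w' i)) => [|i _]; [lia | apply: ww'].
Qed.

End NatCodes.

Section SeqCode.
Context {R : realType}.

Lemma pow3V_gt0 k : 0 < 3 ^- k :> R.
Proof. by rewrite invr_gt0 exprn_gt0. Qed.

Lemma pow3V_le {k l} : (k <= l)%N -> 3 ^- l <= 3 ^- k :> R.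
Proof. by move=> kl; rewrite lef_pV2 ?posrE ?exprn_gt0 // ler_eXn2l // ltr1n. Qed.

Lemma pow3VS k : 3 ^- k = 3 * 3 ^- k.+1 :> R.
Proof. by rewrite exprS invfM mulrA mulfV ?mul1r. Qed.

(* The ternary expansion of [seq_code w] is 0^(w 0) 2 0^(w 1) 2 0^(w 2) ...,
   the digit 2 sitting at the positions [(code_pos w n).+1]. *)
Definition partial_code (w : nat -> nat) (N : nat) : R :=
  \sum_(n < N) 2 * 3 ^- (code_pos w n).+1.

Definition seq_code (w : nat -> nat) : R := sup (range (partial_code w)).

Lemma partial_codeS w N :
  partial_code w N.+1 = partial_code w N + 2 * 3 ^- (code_pos w N).+1.
Proof. by rewrite /partial_code big_ord_recr. Qed.

Lemma eq_partial_code {w w' N} :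
  (forall i, (i < N)%N -> w i = w' i) -> partial_code w N = partial_code w' N.
Proof.
move=> ww'; apply: eq_bigr => i _; congr (2 * 3 ^- _.+1).
by apply: eq_code_pos => j ji; apply: ww'; apply: leq_ltn_trans ji _.
Qed.

Lemma partial_code_le w M N : partial_code w M <= partial_code w N + 3 ^- code_pos w N.
Proof.
have pc_mono : {homo partial_code w : m n / (m <= n)%N >-> m <= n}.
  apply: homo_leq => [//|y x z|n]; first exact: le_trans.
  by rewrite partial_codeS lerDl mulr_ge0 // ltW // pow3V_gt0.
have ub_anti : {homo (fun n => partial_code w n + 3 ^- code_pos w n) :
    m n / (m <= n)%N >-> n <= m}.
  apply: homo_leq => [//|y x z xy yz|n]; first exact: le_trans yz xy.
  rewrite partial_codeS [3 ^- code_pos w n]pow3VS -addrA lerD2l.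
  have : 3 ^- code_pos w n.+1 <= 3 ^- (code_pos w n).+1 :> R.
    by apply: pow3V_le; rewrite code_posS ltnS leq_addr.
  lra.
case: (leqP M N) => [MN|/ltnW NM].
  by apply: le_trans (pc_mono _ _ MN) _; rewrite lerDl ltW // pow3V_gt0.
by apply: le_trans (ub_anti _ _ NM); rewrite lerDl ltW // pow3V_gt0.
Qed.

Lemma seq_code_bounds w N :
  partial_code w N <= seq_code w <= partial_code w N + 3 ^- code_pos w N.
Proof.
have ne : range (partial_code w) !=set0 by exists (partial_code w 0), 0%N.
apply/andP; split.
  apply: sup_upper_bound; last by exists N.
  split=> //; exists (partial_code w 0 + 3 ^- code_pos w 0).
  by move=> _ [M _ <-]; apply: partial_code_le.
by apply: ge_sup => // _ [M _ <-]; apply: partial_code_le.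
Qed.

Lemma seq_code_le w n : seq_code w <= partial_code w n + 3 ^- w n.
Proof.
have /andP[_ ub] := seq_code_bounds w n.
by apply: le_trans ub _; rewrite lerD2l pow3V_le // leq_code_pos.
Qed.

Lemma seq_code_gap {w w' n} : (forall i, (i < n)%N -> w i = w' i) -> (w n < w' n)%N ->
  seq_code w' + 3 ^- (code_pos w n).+1 <= seq_code w.
Proof.
move=> ww' lt_n.
have /andP[_ ub'] := seq_code_bounds w' n.
have /andP[lb _] := seq_code_bounds w n.+1.
have := pow3V_le (code_pos_lt ww' lt_n); rewrite partial_codeS (eq_partial_code ww') in lb.
lra.
Qed.

Lemma seq_code_sep {w w' n} : (forall i, (i < n)%N -> w i = w' i) -> w n != w' n ->
  3 ^- (code_pos w n).+1 <= `|seq_code w - seq_code w'|.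
Proof.
move=> ww'; case: ltngtP => // [lt_n|gt_n] _.
  by have := seq_code_gap ww' lt_n; rewrite ler_normr; lra.
have w'w i : (i < n)%N -> w' i = w i by move=> /ww'.
have := seq_code_gap w'w gt_n; rewrite ler_normr.
have : 3 ^- (code_pos w n).+1 <= 3 ^- (code_pos w' n).+1 :> R.
  by apply/pow3V_le/ltnW/(code_pos_lt w'w gt_n).
lra.
Qed.

Lemma seq_code_agree {w w' m} : `|seq_code w - seq_code w'| < 3 ^- (code_pos w m).+1 ->
  forall i, (i <= m)%N -> w i = w' i.
Proof.
move=> close i im; apply/eqP/negPn/negP => neq_i.
have [k neq_k min_k] := ex_minnP (ex_intro (fun k => w k != w' k) i neq_i).
have agree_k j : (j < k)%N -> w j = w' j.
  by move=> jk; apply/eqP/negPn/negP => /min_k; rewrite leqNgt jk.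
have := seq_code_sep agree_k neq_k.
have : 3 ^- (code_pos w m).+1 <= 3 ^- (code_pos w k).+1 :> R.
  by apply/pow3V_le; rewrite ltnS code_pos_mono // (leq_trans (min_k _ neq_i)).
lra.
Qed.

Lemma exists_pow2V_lt {e : R} : 0 < e -> exists k, 2 ^- k < e.
Proof.
move=> e_gt0; exists (Num.bound e^-1).
by rewrite -[X in _ < X]invrK ltf_pV2 ?posrE ?exprn_gt0 ?invr_gt0 // upper_nthrootP.
Qed.

Lemma exists_pow3V_lt {e : R} : 0 < e -> exists k, 3 ^- k < e.
Proof.
move=> /exists_pow2V_lt[k lt_e]; exists k; apply: le_lt_trans lt_e.
by rewrite lef_pV2 ?posrE ?exprn_gt0 // lerXn2r ?nnegrE // ler_nat.
Qed.

Definition covered_by (eps : nat -> R) (X : set R) : Prop :=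
  exists a b : nat -> R,
    (forall n, b n - a n < eps n) /\ X `<=` \bigcup_n `[a n, b n]%classic.

Lemma covered_by_unbounded_seq_code {eps : nat -> R} : (forall n, 0 < eps n) ->
  exists G : nat -> nat,
    covered_by eps (seq_code @` [set w | ~ (forall n, (w n <= G n)%N)]).
Proof.
move=> eps_gt0; have [L L_lt] := choice (fun j => exists_pow3V_lt (eps_gt0 j)).
(* Interval j starts at the code of the finite sequence numbered j; a w first
   escaping G at m lies in the interval numbered by its prefix of length m. *)
pose a j := partial_code (nth 0%N (CodeSeq.decode j)) (size (CodeSeq.decode j)).
exists (cover_growth L), a, (fun j => a j + 3 ^- L j).
split=> [j|_ [w /existsNP unbounded <-]]; first by rewrite addrC addKr.
have {}unbounded : exists m, (cover_growth L m < w m)%N.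
  by case: unbounded => m /negP; rewrite -ltnNge; exists m.
have [m wm_gt min_m] := ex_minnP unbounded.
pose s := mkseq w m.
have a_s : a (CodeSeq.code s) = partial_code w m.
  rewrite /a CodeSeq.codeK size_mkseq; apply: eq_partial_code => i im.
  by rewrite nth_mkseq.
have L_lt_w : (L (CodeSeq.code s) < w m)%N.
  apply: leq_ltn_trans wm_gt; rewrite -[in cover_growth L m](size_mkseq w m).
  apply: leq_cover_growth_code => i; rewrite size_mkseq => im; rewrite nth_mkseq //.
  by rewrite leqNgt; apply/negP => /min_m; rewrite leqNgt im.
exists (CodeSeq.code s) => //=; rewrite in_itv /= a_s.
have /andP[-> _] := seq_code_bounds w m.
by apply: le_trans (seq_code_le w m) _; rewrite lerD2l pow3V_le // ltnW.
Qed.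

Lemma covered_by_setU {eps : nat -> R} {Y Z : set R} :
  covered_by (fun n => eps n.*2)%N Y -> covered_by (fun n => eps n.*2.+1)%N Z ->
  covered_by eps (Y `|` Z).
Proof.
move=> [a1 [b1 [len1 cov1]]] [a2 [b2 [len2 cov2]]].
exists (interleave a1 a2), (interleave b1 b2); split=> [n|x [/cov1|/cov2] [j _ xj]].
- rewrite /interleave -[in eps n](odd_double_half n).
  by case: (odd n); [apply: len2 | apply: len1].
- by exists j.*2%N; rewrite // !interleave_double.
- by exists j.*2.+1%N; rewrite // !interleave_doubleS.
Qed.

Lemma strongly_null_seq_code (S : set (nat -> nat)) :
  (forall G, strongly_null (seq_code @` [set w | S w /\ forall n, (w n <= G n)%N])) ->
  strongly_null (seq_code @` S).
Proof.
move=> bounded_null eps eps_gt0.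
have [G cov_unbounded] := covered_by_unbounded_seq_code (fun n => eps_gt0 n.*2.+1)%N.
have cov_bounded := bounded_null G _ (fun n => eps_gt0 n.*2)%N.
have [a [b [len cov]]] := covered_by_setU cov_bounded cov_unbounded.
exists a, b; split=> // _ [w Sw <-]; apply: cov.
by case: (pselect (forall n, (w n <= G n)%N)); [left | right]; exists w.
Qed.

Definition dyadic_code (y : R) (n : nat) : nat := pickle (Num.floor (2 ^+ n * y)).

Lemma dyadic_code_close y y' n :
  dyadic_code y n = dyadic_code y' n -> `|y - y'| < 2 ^- n.
Proof.
move=> /(pcan_inj pickleK) eq_floor.
suff : `|2 ^+ n * y - 2 ^+ n * y'| < 1.
  by rewrite -mulrBr normrM ger0_norm ?exprn_ge0 // mulrC -ltr_pdivlMr ?exprn_gt0 // div1r.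
have := floor_le (2 ^+ n * y); have := floorD1_gt (2 ^+ n * y).
have := floor_le (2 ^+ n * y'); have := floorD1_gt (2 ^+ n * y').
rewrite -eq_floor intrD ltr_norml; lra.
Qed.

Lemma interleave_dyadic_modulus (u : R -> nat -> nat) (y e : R) : 0 < e ->
  exists2 d, 0 < d & forall y', `|seq_code (interleave (u y) (dyadic_code y))
    - seq_code (interleave (u y') (dyadic_code y'))| < d -> `|y - y'| < e.
Proof.
move=> /exists_pow2V_lt[m lt_e].
exists (3 ^- (code_pos (interleave (u y) (dyadic_code y)) m.*2.+1%N).+1) => [|y' close].
  exact: pow3V_gt0.
have := seq_code_agree close _ (leqnn _); rewrite !interleave_doubleS.
by move=> /dyadic_code_close /lt_trans; apply.
Qed.

End SeqCode.

Section ContinuousInverse.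
Context {R : realType} (A : set R) (h : R -> R).
Hypothesis inverse_modulus : forall y, A y -> forall e : R, 0 < e ->
  exists2 d : R, 0 < d & forall y', A y' -> `|h y - h y'| < d -> `|y - y'| < e.

Lemma inverse_modulus_inj : {in A &, injective h}.
Proof.
move=> y y'; rewrite !inE => Ay Ay' eq_h; apply/eqP; apply: contraT => neq.
have /(inverse_modulus _ Ay)[d d_gt0 /(_ y' Ay')] : 0 < `|y - y'|.
  by rewrite normr_gt0 subr_eq0.
by rewrite eq_h subrr normr0 ltxx => /(_ d_gt0).
Qed.

Lemma within_continuous_pinv : {within h @` A, continuous (pinv A h)}.
Proof.
have h_inj := inverse_modulus_inj.
apply/subspace_continuousP => _ [y Ay <-].
change (pinv A h @ within (h @` A) (nbhs (h y)) --> pinv A h (h y)).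
rewrite pinvKV ?inE //; apply/cvgrPdist_lt => e /(inverse_modulus _ Ay)[d d_gt0 close].
rewrite near_withinE; apply/nbhs_ballP; exists d => //= t hyt [y' Ay' hy't].
rewrite -hy't pinvKV ?inE //; apply: close => //.
by rewrite hy't; move: hyt; rewrite -ball_normE.
Qed.

End ContinuousInverse.

Lemma card_le_lt_trans T U V (A : set T) (B : set U) (C : set V) :
  (A #<= B)%card -> card_lt B C -> card_lt A C.
Proof.
move=> AB [BC not_CB]; split; first exact: card_le_trans AB BC.
by move=> CA; apply: not_CB; apply: card_le_trans CA AB.
Qed.

Lemma card_lt_eqr T U V (A : set T) (B : set U) (C : set V) :
  card_lt A B -> (B #= C)%card -> card_lt A C.
Proof.
by move=> [AB not_BA] BC; split; [rewrite -(card_le_eqr BC) | rewrite -(card_le_eql BC)].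
Qed.

Lemma card_lt_bounded_codes {T} {X : set T} {A : set (nat -> nat)}
    {k F : T -> nat -> nat} (G : nat -> nat) :
  strongly_unbounded A -> set_bij X A k -> (forall y n, F y n.*2%N = k y n) ->
  card_lt [set w | (F @` X) w /\ forall n, (w n <= G n)%N] X.
Proof.
move=> unbounded_A k_bij Fk; have [k_fun k_inj _] := k_bij.
pose D := [set y | X y /\ forall n, (F y n <= G n)%N].
have bounded_sub : [set w | (F @` X) w /\ forall n, (w n <= G n)%N] `<=` F @` D.
  by move=> _ [[y Xy <-] bounded]; exists y.
apply: card_le_lt_trans (card_le_trans (subset_card_le bounded_sub) (card_image_le _ _)) _.
have kD_sub : k @` D `<=` [set a | A a /\ leq_star a (fun n => G n.*2)%N].
  move=> _ [y [Xy bounded] <-]; split; first exact: k_fun.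
  by exists 0%N => n _; rewrite -Fk.
have kD_inj : {in D &, injective k}.
  by move=> y y' /[!inE] -[Xy _] -[Xy' _] eq_k; apply: k_inj eq_k; rewrite inE.
have /card_eqPle[_ D_kD] := inj_card_eq kD_inj.
have XA : (A #= X)%card by rewrite card_eq_sym; apply/card_set_bijP; exists k.
apply: card_lt_eqr XA; apply: card_le_lt_trans (unbounded_A (fun n => G n.*2)%N).
exact: card_le_trans D_kD (subset_card_le kD_sub).
Qed.

Theorem theorem2p1 (R : realType) :
  (exists A : set (nat -> nat), card_is_nonSMZ R A /\ strongly_unbounded A) ->
  exists (X : set R) (f : R -> R),
    strongly_null X /\ {within X, continuous f} /\ ~ strongly_null (f @` X).
Proof.
case=> A [[X0 [not_null_X0 [AX0 small_null]]] unbounded_A].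
have [k k_bij] : exists k, set_bij X0 A k by apply/card_set_bijP; rewrite card_eq_sym.
pose code (y : R) := interleave (k y) (dyadic_code y).
have h_modulus y : X0 y -> forall e : R, 0 < e -> exists2 d : R, 0 < d &
    forall y', X0 y' -> `|seq_code (code y) - seq_code (code y')| < d -> `|y - y'| < e.
  by move=> _ e /(interleave_dyadic_modulus k y)[d d_gt0 close]; exists d => // y' _ /close.
exists ((seq_code \o code) @` X0), (pinv X0 (seq_code \o code)); split; [|split].
- rewrite -image_comp; apply: strongly_null_seq_code => G; apply: small_null.
  apply: card_le_lt_trans (card_image_le _ _) (card_lt_bounded_codes G unbounded_A k_bij _).
  by move=> y n; apply: interleave_double.
- exact: within_continuous_pinv h_modulus.
- by rewrite injpinv_image //; apply: inverse_modulus_inj h_modulus.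
Qed.
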